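(* In any two-player perfect-information game, let $U_s$ be the exact EPFs and $U'_s=\bigwedge_{s'\in\mathcal C(s)}(U_{s'}\triangleright\beta(s'))$ for non-leaf $s$ (with $U'_\ell=U_\ell$ for leaves). Let $\{\tilde U_s\}$ be learned EPFs and $\tilde U'_s$ their one-step lookahead targets, all as in the context. Then for every $s\in\mathcal S$, $$\mathrm{Dom}[U_s]=\mathrm{Dom}[U'_s]=\mathrm{Dom}[\tilde U_s]=\mathrm{Dom}[\tilde U'_s]=[\underline V(s),\overline V(s)],$$ where $\mathrm{Dom}[h]=\{\mu: h(\mu)>-\infty\}$.
   Context: A two-player perfect-information game is a finite rooted tree with states $\mathcal S$. Its leaves $\mathcal L$ carry payoffs $r_1(\ell),r_2(\ell)$ for the leader $\mathsf P_1$ and the follower $\mathsf P_2$. Non-leaf states are partitioned into leader states $\mathcal S_1$ and follower states $\mathcal S_2$, and $\mathcal C(s)$ denotes the children of $s$. Bounds, defined by backward induction: - $\underline V(\ell)=\overline V(\ell)=r_2(\ell)$ for leaves; - $\underline V(s)=\min_{s'}\underline V(s')$ for $s\in\mathcal S_1$; - $\underline V(s)=\max_{s'}\underline V(s')$ for $s\in\mathcal S_2$; - $\overline V(s)=\max_{s'}\overline V(s')$ for every non-leaf $s$. For $s\in\mathcal S_2$ and $s'\in\mathcal C(s)$, let $\tau(s')=\max_{s^!\in\mathcal C(s),s^!\ne s'}\underline V(s^!)$. Let $\beta(s')=\tau(s')$ if the parent of $s'$ is in $\mathcal S_2$, and $-\infty$ if it is in $\mathcal S_1$. Operators, for $g:\mathbb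 R\to\mathbb R\cup\{-\infty\}$: - $\bigwedge_i g_i$ is the pointwise infimum of all concave $h\ge\max_i g_i$; - $[g\triangleright t](\mu)=g(\mu)$ for $\mu\ge t$ and $-\infty$ otherwise. Exact EPFs: $U_\ell(\mu)=r_1(\ell)$ if $\mu=r_2(\ell)$ and $-\infty$ otherwise; $U_s=\bigwedge_{s'\in\mathcal C(s)}(U_{s'}\triangleright\beta(s'))$. Learned EPFs: $\tilde U_\ell=U_\ell$ for leaves. For non-leaf $s$, $\tilde U_s$ is the piecewise linear interpolation of finitely many points with $x$-coordinates in $[\underline V(s),\overline V(s)]$ including both endpoints. It is real-valued on that interval and $-\infty$ outside. Targets: $\tilde U'_s=\bigwedge_{s'\in\mathcal C(s)}(\tilde U_{s'}\triangleright\beta(s'))$ for non-leaf $s$, and $\tilde U'_\ell=\tilde U_\ell$. *)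

From HB Require Import structures.
From mathcomp Require Import all_boot all_order all_algebra.
From mathcomp Require Import all_classical all_reals.
From mathcomp Require Import ereal.

Set Implicit Arguments.
Unset Strict Implicit.
Unset Printing Implicit Defensive.

Import Order.TTheory GRing.Theory Num.Theory.
Local Open Scope classical_set_scope.
Local Open Scope ring_scope.

Section Game.
Variable R : realType.

(* A finite rooted game tree.  [Leaf r1 r2] is a leaf with payoffs
   r1 (leader) and r2 (follower).  [Node leader c cs] is a non-leaf state
   with the (nonempty) list of children [c :: cs]; [leader = true] means the
   state belongs to S_1 (leader), [false] means S_2 (follower). *)
Inductive game : Type :=
| Leaf of R & R
| Node of bool & game & seq game.

Definition children (g : game) : seq game :=
  match g with Leaf _ _ => [::] | Node _ c cs => c :: cs end.

(* States of the tree are addressed by paths (lists of child indices) from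
   the root; [subtree g p] is the state at path p (if p is valid). *)
Fixpoint subtree (g : game) (p : seq nat) {struct p} : option game :=
  match p with
  | [::] => Some g
  | i :: p' => if (i < size (children g))%N
               then subtree (nth g (children g) i) p' else None
  end.

Fixpoint Vlo (g : game) : R :=
  match g with
  | Leaf _ r2 => r2
  | Node b c cs => if b then foldr Num.min (Vlo c) (map Vlo cs)
                   else foldr Num.max (Vlo c) (map Vlo cs)
  end.

Fixpoint Vhi (g : game) : R :=
  match g with
  | Leaf _ r2 => r2
  | Node _ c cs => foldr Num.max (Vhi c) (map Vhi cs)
  end.

Definition tau (ch : seq game) (i : nat) : \bar R :=
  foldr (fun x y => Order.max x y) -oo%E
    [seq (Vlo (nth (Leaf 0 0) ch j))%:E | j <- iota 0 (size ch) & j != i].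

Definition beta (leader : bool) (ch : seq game) (i : nat) : \bar R :=
  if leader then -oo%E else tau ch i.

(* Extended-valued functions R -> R u {-oo} are modelled as R -> \bar R. *)

(* Concavity of h : R -> R u {-oo}: its hypograph is convex. *)
Definition concave_ext (h : R -> \bar R) : Prop :=
  forall (x y a b t : R), (0 <= t <= 1)%R ->
    (a%:E <= h x)%E -> (b%:E <= h y)%E ->
    (((t * a + (1 - t) * b)%R)%:E <= h (t * x + (1 - t) * y)%R)%E.

Definition env (gs : seq (R -> \bar R)) : R -> \bar R :=
  fun mu => ereal_inf
    [set h mu | h in [set h : R -> \bar R |
        concave_ext h /\ (forall x, h x != +oo%E) /\
        (forall g, g \in gs -> forall x, (g x <= h x)%E)]].

Definition trunc (g : R -> \bar R) (t : \bar R) : R -> \bar R :=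
  fun mu => if (t <= mu%:E)%E then g mu else -oo%E.

Definition leafEPF (r1 r2 : R) : R -> \bar R :=
  fun mu => if mu == r2 then r1%:E else -oo%E.

Fixpoint U (g : game) : R -> \bar R :=
  match g with
  | Leaf r1 r2 => leafEPF r1 r2
  | Node b c cs =>
      let Us := U c :: map U cs in
      env [seq trunc (nth (fun _ => -oo%E) Us i) (beta b (c :: cs) i)
          | i <- iota 0 (size Us)]
  end.

Definition U' (g : game) : R -> \bar R :=
  match g with
  | Leaf _ _ => U g
  | Node b c cs =>
      env [seq trunc (U (nth c (c :: cs) i)) (beta b (c :: cs) i)
          | i <- iota 0 (size (c :: cs))]
  end.

Definition Dom (h : R -> \bar R) : set R := [set mu | (-oo < h mu)%E].

Definition is_pwl (h : R -> \bar R) (lo hi : R) : Prop :=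
  exists pts : seq (R * R),
  [/\ pts != [::],
      sorted (fun a b => a.1 < b.1)%R pts,
      (head (0, 0) pts).1 = lo &
      (last (0, 0) pts).1 = hi] /\
  [/\ (forall q, q \in pts -> h q.1 = q.2%:E),
      (forall k, (k.+1 < size pts)%N ->
         let a := nth (0, 0) pts k in let b := nth (0, 0) pts k.+1 in
         forall mu, (a.1 <= mu <= b.1)%R ->
           h mu = ((a.2 + (mu - a.1) * (b.2 - a.2) / (b.1 - a.1))%R)%:E)
    & (forall mu, ~ (lo <= mu <= hi)%R -> h mu = -oo%E)].

Definition learned (g : game) (Ut : seq nat -> R -> \bar R) : Prop :=
  forall p s, subtree g p = Some s ->
    match s with
    | Leaf r1 r2 => Ut p = leafEPF r1 r2
    | Node _ _ _ => is_pwl (Ut p) (Vlo s) (Vhi s)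
    end.

Definition target (Ut : seq nat -> R -> \bar R) (p : seq nat) (s : game)
  : R -> \bar R :=
  match s with
  | Leaf _ _ => Ut p
  | Node b c cs =>
      env [seq trunc (Ut (rcons p i)) (beta b (c :: cs) i)
          | i <- iota 0 (size (c :: cs))]
  end.

End Game.

From HB Require Import structures.
From mathcomp Require Import all_boot all_order all_algebra.
From mathcomp Require Import all_classical all_reals.
From mathcomp Require Import ereal.
From mathcomp Require Import ring lra.
Import Order.TTheory GRing.Theory Num.Theory.
Local Open Scope classical_set_scope.
Local Open Scope ring_scope.

(* The concave envelope of finitely many functions that are bounded above and
   finite only inside [lo, hi] is -oo outside [lo, hi]: the function equal to the
   bound on [lo, hi] and to -oo elsewhere is a concave majorant.  It is finite on
   the whole of [lo, hi] as soon as one of the functions is finite at lo and one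
   at hi, because concavity propagates finite values to convex combinations.
   At a state s the truncated child EPFs are finite exactly on
   [max (beta, V_lo child), V_hi child]; these intervals lie in [V_lo s, V_hi s],
   and since beta never exceeds V_lo s, the children attaining V_lo s and V_hi s
   keep both endpoints.  Leaf and learned EPFs are finite exactly on
   [V_lo s, V_hi s] by construction, so induction on the tree gives all four
   domains. *)

Set Implicit Arguments.
Unset Strict Implicit.
Unset Printing Implicit Defensive.

Section FoldExtremum.
Context {disp : Order.disp_t} {T : orderType disp}.
Implicit Types (a x : T) (l : seq T).

Lemma foldr_max_mem a l : foldr Order.max a l \in a :: l.
Proof.
elim: l => [|y l IH] /=; first exact: mem_head.
case: (leP y (foldr Order.max a l)) => _; last by rewrite !inE eqxx orbT.
by move: IH; rewrite !inE => /orP [->|->]; rewrite ?orbT.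
Qed.

Lemma le_foldr_max a l x : x \in a :: l -> (x <= foldr Order.max a l)%O.
Proof.
elim: l => [|y l IH]; first by rewrite inE => /eqP ->.
rewrite /= le_max; have [->|xy] := eqVneq x y; first by rewrite lexx.
by rewrite !inE (negbTE xy) /= => xal; rewrite IH ?orbT // inE.
Qed.

Lemma foldr_min_mem a l : foldr Order.min a l \in a :: l.
Proof.
elim: l => [|y l IH] /=; first exact: mem_head.
case: (leP y (foldr Order.min a l)) => _; first by rewrite !inE eqxx orbT.
by move: IH; rewrite !inE => /orP [->|->]; rewrite ?orbT.
Qed.

Lemma foldr_min_le a l x : x \in a :: l -> (foldr Order.min a l <= x)%O.
Proof.
elim: l => [|y l IH]; first by rewrite inE => /eqP ->.
rewrite /= ge_min; have [->|xy] := eqVneq x y; first by rewrite lexx.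
by rewrite !inE (negbTE xy) /= => xal; rewrite IH ?orbT // inE.
Qed.

End FoldExtremum.

Lemma mem_map_nth (T1 : Type) (T2 : eqType) (f : T1 -> T2) (s : seq T1) x0 i :
  (i < size s)%N -> f (nth x0 s i) \in map f s.
Proof. by move=> ilt; rewrite -(nth_map x0 (f x0)) // mem_nth ?size_map. Qed.

Lemma nth_of_mem_map (T1 : Type) (T2 : eqType) (f : T1 -> T2) (s : seq T1) x0 y :
  y \in map f s -> exists2 i, (i < size s)%N & f (nth x0 s i) = y.
Proof.
move=> ys; have ilt : (index y (map f s) < size s)%N by rewrite -(size_map f) index_mem.
by exists (index y (map f s)); rewrite // -(nth_map x0 y) // nth_index.
Qed.

Section Envelope.
Variable R : realType.
Implicit Types (gs : seq (R -> \bar R)) (g h : R -> \bar R) (lo hi M x y a b t : R).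

Definition bounded_above h := exists M : R, forall x, (h x <= M%:E)%E.

Definition itv_cst lo hi M : R -> \bar R :=
  fun x => if lo <= x <= hi then M%:E else -oo%E.

Lemma itv_cst_le lo hi M x : (itv_cst lo hi M x <= M%:E)%E.
Proof. by rewrite /itv_cst; case: ifP => _; rewrite ?leNye. Qed.

Lemma concave_itv_cst lo hi M : concave_ext (itv_cst lo hi M).
Proof.
move=> x y a b t /andP[t0 t1]; rewrite /itv_cst.
case: ifP => [/andP[lox xhi]|_]; last by rewrite leeNy_eq.
case: ifP => [/andP[loy yhi]|_]; last by rewrite leeNy_eq.
rewrite !lee_fin => aM bM.
have -> : lo <= t * x + (1 - t) * y <= hi by apply/andP; split; nra.
by rewrite lee_fin; nra.
Qed.

Lemma le_itv_cst g lo hi M :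
  (forall x, (g x <= M%:E)%E) -> (forall x, (-oo < g x)%E -> lo <= x <= hi) ->
  forall x, (g x <= itv_cst lo hi M x)%E.
Proof.
move=> gM gdom x; rewrite /itv_cst; case: ifPn => [_|xout]; first exact: gM.
by rewrite leNgt; exact: contra (gdom x) xout.
Qed.

Lemma env_le_itv_cst gs lo hi M :
  (forall g, g \in gs -> forall x, (g x <= itv_cst lo hi M x)%E) ->
  forall x, (env gs x <= itv_cst lo hi M x)%E.
Proof.
move=> gs_le x; apply: ereal_inf_lbound; exists (itv_cst lo hi M) => //.
split; first exact: concave_itv_cst.
by split=> // y; rewrite /itv_cst; case: ifP.
Qed.

Lemma env_ge_convex gs g1 g2 x y a b t :
  g1 \in gs -> g2 \in gs -> 0 <= t <= 1 ->
  (a%:E <= g1 x)%E -> (b%:E <= g2 y)%E ->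
  ((t * a + (1 - t) * b)%:E <= env gs (t * x + (1 - t) * y))%E.
Proof.
move=> g1gs g2gs t01 ag1 bg2; apply/ereal_infP => _ [h [hconc [_ gs_le]] <-].
by apply: hconc => //; [exact: le_trans ag1 (gs_le _ g1gs x)
                       | exact: le_trans bg2 (gs_le _ g2gs y)].
Qed.

Lemma itv_convex_comb lo hi x :
  lo <= x <= hi -> exists2 t, 0 <= t <= 1 & x = t * lo + (1 - t) * hi.
Proof.
move=> /andP[lox xhi]; have [lohi|lohi] := eqVneq lo hi.
  by exists 1; [rewrite ler01 lexx | lra].
have lthi : lo < hi by rewrite lt_neqAle lohi (le_trans lox xhi).
exists ((hi - x) / (hi - lo)); last by field; lra.
by rewrite divr_ge0 ?subr_ge0 ?(ltW lthi) //= ler_pdivrMr ?subr_gt0 // mul1r; lra.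
Qed.

Lemma Dom_env gs lo hi M :
  (forall g, g \in gs -> forall x, (g x <= itv_cst lo hi M x)%E) ->
  (exists2 g, g \in gs & (-oo < g lo)%E) ->
  (exists2 g, g \in gs & (-oo < g hi)%E) ->
  Dom (env gs) = `[lo, hi]%classic.
Proof.
move=> gs_le [g1 g1gs g1lo] [g2 g2gs g2hi].
have real_at g z : g \in gs -> (-oo < g z)%E -> exists a : R, g z = a%:E.
  move=> ggs; have := le_trans (gs_le g ggs z) (itv_cst_le lo hi M z).
  by case: (g z) => [a| |] // _ _; exists a.
apply/seteqP; split => x /=; rewrite in_itv /=.
  move=> envx; apply: contraTT envx => xout.
  by rewrite -leNgt (le_trans (env_le_itv_cst gs_le x)) // /itv_cst (negbTE xout).
move=> /itv_convex_comb[t t01 ->].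
have [a ea] := real_at g1 lo g1gs g1lo; have [b eb] := real_at g2 hi g2gs g2hi.
apply: lt_le_trans (env_ge_convex g1gs g2gs t01 _ _); first by rewrite ltNyr.
  by rewrite ea.
by rewrite eb.
Qed.

Lemma bounded_above_uniform n (F : nat -> R -> \bar R) :
  (forall i, (i < n)%N -> bounded_above (F i)) ->
  exists M : R, forall i, (i < n)%N -> forall x, (F i x <= M%:E)%E.
Proof.
elim: n => [|n IH] Fb; first by exists 0.
have [M1 HM1] := IH (fun i lt => Fb i (ltnW lt)).
have [M2 HM2] := Fb n (ltnSn n).
exists (Num.max M1 M2) => i; rewrite ltnS leq_eqVlt => /orP[/eqP-> | lt] x.
  by apply: le_trans (HM2 x) _; rewrite lee_fin le_max lexx orbT.
by apply: le_trans (HM1 i lt x) _; rewrite lee_fin le_max lexx.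
Qed.

End Envelope.

(* The generated [game_ind] has no induction hypothesis for the children in [cs]. *)
Section GameInduction.
Variables (R : realType) (P : game R -> Prop).
Hypothesis Pleaf : forall r1 r2, P (Leaf r1 r2).
Hypothesis Pnode : forall b c cs, (forall i, P (nth c (c :: cs) i)) -> P (Node b c cs).

Fixpoint game_ind_nth (s : game R) : P s :=
  match s with
  | Leaf r1 r2 => Pleaf r1 r2
  | Node b c cs => Pnode b
      ((fix all_nth (l : seq (game R)) (i : nat) {struct l} : P (nth c l i) :=
          match l, i as i0 return P (nth c l i0) with
          | [::], 0 | [::], _.+1 => game_ind_nth c
          | d :: _, 0 => game_ind_nth d
          | _ :: l', i'.+1 => all_nth l' i'
          end) (c :: cs))
  end.

End GameInduction.

Section GameValues.
Variable R : realType.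
Implicit Types (b : bool) (c s : game R) (cs : seq (game R)) (x : R).

Lemma Vhi_child_le b c cs i :
  (i < size (c :: cs))%N -> Vhi (nth c (c :: cs) i) <= Vhi (Node b c cs).
Proof. by move=> ilt; apply: le_foldr_max; exact: mem_map_nth. Qed.

Lemma Vhi_attained b c cs :
  exists2 j, (j < size (c :: cs))%N & Vhi (nth c (c :: cs) j) = Vhi (Node b c cs).
Proof. by apply: nth_of_mem_map; exact: foldr_max_mem. Qed.

Lemma Vlo_attained b c cs :
  exists2 k, (k < size (c :: cs))%N & Vlo (nth c (c :: cs) k) = Vlo (Node b c cs).
Proof.
by apply: nth_of_mem_map; case: b; [exact: foldr_min_mem | exact: foldr_max_mem].
Qed.

Lemma Vlo_leader_le c cs i :
  (i < size (c :: cs))%N -> Vlo (Node true c cs) <= Vlo (nth c (c :: cs) i).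
Proof. by move=> ilt; apply: foldr_min_le; exact: mem_map_nth. Qed.

Lemma Vlo_follower_ge c cs i :
  (i < size (c :: cs))%N -> Vlo (nth c (c :: cs) i) <= Vlo (Node false c cs).
Proof. by move=> ilt; apply: le_foldr_max; exact: mem_map_nth. Qed.

Lemma tau_ge (ch : seq (game R)) d i k : (k < size ch)%N -> k != i ->
  ((Vlo (nth d ch k))%:E <= tau ch i)%E.
Proof.
move=> klt ki; apply: le_foldr_max; rewrite inE (set_nth_default (Leaf 0 0)) //.
apply/orP; right; apply: (map_f (fun j => (Vlo (nth (Leaf 0 0) ch j))%:E)).
by rewrite mem_filter ki mem_iota.
Qed.

Lemma tau_le_Vlo c cs i : (tau (c :: cs) i <= (Vlo (Node false c cs))%:E)%E.
Proof.
rewrite /tau; set l := [seq _ | _ <- _]; have := foldr_max_mem -oo%E l.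
rewrite inE => /orP[/eqP->|]; first exact: leNye.
move=> /mapP[j]; rewrite mem_filter mem_iota => /andP[_ jlt] ->.
by rewrite lee_fin (set_nth_default c) //; exact: Vlo_follower_ge.
Qed.

Lemma beta_le_Vlo b c cs i : (beta b (c :: cs) i <= (Vlo (Node b c cs))%:E)%E.
Proof. by case: b; [exact: leNye | exact: tau_le_Vlo]. Qed.

(* At a follower state every child but the maximiser of [Vlo] is truncated at
   a [tau] that is at least this maximum. *)
Lemma Vlo_node_le b c cs i x : (i < size (c :: cs))%N ->
  (beta b (c :: cs) i <= x%:E)%E -> Vlo (nth c (c :: cs) i) <= x ->
  Vlo (Node b c cs) <= x.
Proof.
move=> ilt betax Vlox; case: b betax => betax.
  exact: le_trans (Vlo_leader_le ilt) Vlox.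
have [k klt <-] := Vlo_attained false c cs.
have [->//|ki] := eqVneq k i.
by rewrite -lee_fin; exact: le_trans (tau_ge c klt ki) betax.
Qed.

Lemma Vlo_le_Vhi s : Vlo s <= Vhi s.
Proof.
elim/game_ind_nth: s => [//|b c cs IH].
have [k klt <-] := Vlo_attained b c cs.
exact: le_trans (IH k) (Vhi_child_le b klt).
Qed.

End GameValues.

Section Lookahead.
Variable R : realType.
Implicit Types (b : bool) (c : game R) (cs : seq (game R)).

Definition lookahead b (ch : seq (game R)) (F : nat -> R -> \bar R) : R -> \bar R :=
  env [seq trunc (F i) (beta b ch i) | i <- iota 0 (size ch)].

Lemma U_node b c cs :
  U (Node b c cs) = lookahead b (c :: cs) (fun i => U (nth c (c :: cs) i)).
Proof.
transitivity (lookahead b (c :: cs) (nth (fun _ => -oo%E) (map (@U R) (c :: cs)))).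
  by rewrite /lookahead -(size_map (@U R)).
rewrite /lookahead; congr env; apply/eq_in_map => i.
by rewrite mem_iota => /andP[_ ilt]; rewrite (nth_map c).
Qed.

Lemma in_Dom_itv (h : R -> \bar R) lo hi x : Dom h = `[lo, hi]%classic ->
  (-oo < h x)%E = (lo <= x <= hi).
Proof.
move=> /seteqP[sub sup]; apply/idP/idP => hx; first by have := sub x hx; rewrite /= in_itv.
by apply: sup; rewrite /= in_itv.
Qed.

Lemma Dom_trunc (h : R -> \bar R) t lo hi x : Dom h = `[lo, hi]%classic ->
  (-oo < trunc h t x)%E = (t <= x%:E)%E && (lo <= x <= hi).
Proof. by move=> hdom; rewrite /trunc; case: ifP => _; rewrite ?(in_Dom_itv _ hdom) ?ltxx. Qed.

Lemma Dom_lookahead b c cs (F : nat -> R -> \bar R) :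
  (forall i, (i < size (c :: cs))%N ->
     Dom (F i) = `[Vlo (nth c (c :: cs) i), Vhi (nth c (c :: cs) i)]%classic /\
     bounded_above (F i)) ->
  Dom (lookahead b (c :: cs) F) = `[Vlo (Node b c cs), Vhi (Node b c cs)]%classic /\
  bounded_above (lookahead b (c :: cs) F).
Proof.
move=> Fok; have [M FM] := bounded_above_uniform (fun i ilt => (Fok i ilt).2).
rewrite /lookahead; set gs := [seq _ | _ <- _].
have truncF i x : (i < size (c :: cs))%N ->
    (-oo < trunc (F i) (beta b (c :: cs) i) x)%E =
    (beta b (c :: cs) i <= x%:E)%E &&
    (Vlo (nth c (c :: cs) i) <= x <= Vhi (nth c (c :: cs) i)).
  by move=> ilt; apply: Dom_trunc; have [] := Fok i ilt.
have gs_le g : g \in gs -> forall x,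
    (g x <= itv_cst (Vlo (Node b c cs)) (Vhi (Node b c cs)) M x)%E.
  move=> /mapP[i]; rewrite mem_iota => /andP[_ ilt] ->.
  apply: le_itv_cst => x; first by rewrite /trunc; case: ifP => _; [exact: FM | exact: leNye].
  rewrite truncF // => /andP[betax /andP[lox xhi]].
  by rewrite (Vlo_node_le ilt betax lox) (le_trans xhi (Vhi_child_le b ilt)).
have finite_at j y : (j < size (c :: cs))%N -> (beta b (c :: cs) j <= y%:E)%E ->
    Vlo (nth c (c :: cs) j) <= y <= Vhi (nth c (c :: cs) j) ->
    exists2 g, g \in gs & (-oo < g y)%E.
  move=> jlt betay yin; exists (trunc (F j) (beta b (c :: cs) j)).
    by apply: (map_f (fun i => trunc (F i) (beta b (c :: cs) i))); rewrite mem_iota.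
  by rewrite truncF // betay.
split; last by exists M => x; exact: le_trans (env_le_itv_cst gs_le x) (itv_cst_le _ _ _ _).
apply: Dom_env gs_le _ _.
  have [k klt Vlok] := Vlo_attained b c cs.
  by apply: finite_at klt (beta_le_Vlo _ _ _ _) _; rewrite -Vlok lexx Vlo_le_Vhi.
have [j jlt Vhij] := Vhi_attained b c cs.
apply: finite_at jlt _ _; last by rewrite -Vhij lexx Vlo_le_Vhi.
by apply: le_trans (beta_le_Vlo _ _ _ _) _; rewrite lee_fin Vlo_le_Vhi.
Qed.

End Lookahead.

Section EPFDomains.
Variable R : realType.

Lemma leafEPF_dom (r1 r2 : R) :
  Dom (leafEPF r1 r2) = `[r2, r2]%classic /\ bounded_above (leafEPF r1 r2).
Proof.
split; last by exists r1 => x; rewrite /leafEPF; case: ifP => _; rewrite ?leNye.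
rewrite /Dom; apply/seteqP; split => x /=; rewrite in_itv /= /leafEPF -eq_le.
  by case: ifP => // /eqP ->; rewrite eqxx.
by move=> /eqP ->; rewrite eqxx ltNyr.
Qed.

Lemma knot_or_segment (pts : seq (R * R)) x : pts != [::] ->
  (head (0, 0) pts).1 <= x <= (last (0, 0) pts).1 ->
  (exists2 q, q \in pts & q.1 = x) \/
  exists2 k, (k.+1 < size pts)%N &
    (nth (0, 0) pts k).1 <= x <= (nth (0, 0) pts k.+1).1.
Proof.
elim: pts => [|a [|b l] IH] // _ /andP[ax xl].
  by left; exists a; rewrite ?mem_head //; apply: le_anti; rewrite ax xl.
have [xb|bx] := leP x b.1; first by right; exists 0%N; rewrite //= ax xb.
have [[q ql <-]|[k klt xk]] := IH isT (introT andP (conj (ltW bx) xl)).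
  by left; exists q; rewrite // inE ql orbT.
by right; exists k.+1.
Qed.

Lemma lerp_le_max (a b : R * R) x : a.1 <= x <= b.1 ->
  a.2 + (x - a.1) * (b.2 - a.2) / (b.1 - a.1) <= Num.max a.2 b.2.
Proof.
move=> /andP[ax xb].
have a2m : a.2 <= Num.max a.2 b.2 by rewrite le_max lexx.
have b2m : b.2 <= Num.max a.2 b.2 by rewrite le_max lexx orbT.
have [ab|ab] := eqVneq a.1 b.1.
  have -> : x - a.1 = 0 by lra.
  by rewrite !mul0r addr0.
have ltab : 0 < b.1 - a.1 by rewrite subr_gt0 lt_neqAle ab (le_trans ax xb).
have t0 : 0 <= (x - a.1) / (b.1 - a.1) by rewrite divr_ge0 ?(ltW ltab) ?subr_ge0.
have t1 : (x - a.1) / (b.1 - a.1) <= 1 by rewrite ler_pdivrMr // mul1r; lra.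
rewrite mulrAC; move: t0 t1; set t := _ / _ => t0 t1; nra.
Qed.

Lemma pwl_dom (h : R -> \bar R) lo hi : is_pwl h lo hi ->
  Dom h = `[lo, hi]%classic /\ bounded_above h.
Proof.
move=> [pts [[pts0 _ hd lst] [hpts hseg hout]]].
pose M := foldr Num.max 0 (map snd pts).
have snd_le q : q \in pts -> q.2 <= M.
  by move=> qp; apply: le_foldr_max; rewrite inE map_f ?orbT.
have real_in x : lo <= x <= hi -> exists2 a : R, h x = a%:E & a <= M.
  rewrite -hd -lst => /(knot_or_segment pts0)[[q qp <-]|[k klt xk]].
    by exists q.2; rewrite ?hpts ?snd_le.
  have := hseg k klt x xk; move: xk => /lerp_le_max xk hx.
  eexists; first exact: hx.
  by apply: le_trans xk _; rewrite ge_max !snd_le ?mem_nth // ltnW.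
split; last first.
  exists M => x; have [/real_in[a -> aM]|xout] := boolP (lo <= x <= hi).
    by rewrite lee_fin.
  by rewrite hout ?leNye //; exact/negP.
rewrite /Dom; apply/seteqP; split => x /=; rewrite in_itv /=.
  by apply: contraTT => xout; rewrite hout ?ltxx //; exact/negP.
by move=> /real_in[a -> _]; rewrite ltNyr.
Qed.

Lemma subtree_rcons (g : game R) p s i d : subtree g p = Some s ->
  (i < size (children s))%N -> subtree g (rcons p i) = Some (nth d (children s) i).
Proof.
elim: p g => [|j p IH] g /=; last by case: ifP => // _; exact: IH.
by case=> <- ilt; rewrite ilt (set_nth_default g).
Qed.

Lemma learned_dom (g : game R) Ut p s : learned g Ut -> subtree g p = Some s ->
  Dom (Ut p) = `[Vlo s, Vhi s]%classic /\ bounded_above (Ut p).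
Proof.
move=> Utg gps; have := Utg p s gps.
by case: s {gps} => [r1 r2 ->|b c cs]; [exact: leafEPF_dom | exact: pwl_dom].
Qed.

Lemma U_dom (s : game R) :
  Dom (U s) = `[Vlo s, Vhi s]%classic /\ bounded_above (U s).
Proof.
elim/game_ind_nth: s => [r1 r2|b c cs IH]; first exact: leafEPF_dom.
by rewrite U_node; apply: Dom_lookahead => i _; exact: IH.
Qed.

End EPFDomains.

Theorem lemma1 (R : realType) (g : game R) (Ut : seq nat -> R -> \bar R) :
  learned g Ut ->
  forall (p : seq nat) (s : game R), subtree g p = Some s ->
    [/\ Dom (U s) = `[Vlo s, Vhi s]%classic,
        Dom (U' s) = `[Vlo s, Vhi s]%classic,
        Dom (Ut p) = `[Vlo s, Vhi s]%classic
      & Dom (target Ut p s) = `[Vlo s, Vhi s]%classic].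
Proof.
move=> Utg p s gps.
have [Udom _] := U_dom s; have [Utdom _] := learned_dom Utg gps.
split => //; case: s gps Udom Utdom => // b c cs gps _ _.
- by have [] := Dom_lookahead b (fun i _ => U_dom (nth c (c :: cs) i)).
- have [] // := @Dom_lookahead R b c cs (fun i => Ut (rcons p i)).
  by move=> i ilt; apply: learned_dom Utg _; exact: subtree_rcons gps ilt.
Qed.
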